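(* Let $p\geq 3$ be a prime and let $G$ be a group of order $p^5$ generated by elements $f_1,\dots,f_5$ which (possibly among other relations) satisfy: (i) $f_4^p=f_5^p=1$ and $f_5\in Z(G)$; (ii) $[f_2,f_1]=f_3$, $[f_3,f_1]=f_4$, $[f_4,f_1]=[f_3,f_2]=f_5$, $[f_4,f_2]=[f_4,f_3]=1$; (iii) $\langle f_4,f_5\rangle\cong C_p\times C_p$, and $G/\langle f_4,f_5\rangle$ is a non-abelian group of order $p^3$ and exponent $p$. Then $B_0(G)\neq 0$.
   Context: $[g,h]=g^{-1}h^{-1}gh$; $Z(G)$ is the center of $G$; $C_p$ is the cyclic group of order $p$. $B_0(G)=\bigcap_A \ker\{\mathrm{res}^G_A : H^2(G,\mathbb{Q}/\mathbb{Z})\to H^2(A,\mathbb{Q}/\mathbb{Z})\}$, where $A$ runs over all bicyclic subgroups of $G$ (cyclic groups or direct products of two cyclic groups), with trivial action on $\mathbb{Q}/\mathbb{Z}$. *)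

From HB Require Import structures.
From mathcomp Require Import all_boot all_order all_algebra all_fingroup all_solvable.
Set Implicit Arguments. Unset Strict Implicit. Unset Printing Implicit Defensive.
Import GRing.Theory Num.Theory.

(* Q/Z-valued functions are represented by rat-valued functions, and
   equalities in Q/Z are read "modulo Z" (difference is an integer). *)
Local Open Scope ring_scope.
Local Open Scope group_scope.

Definition cocycle2 (gT : finGroupType) (A : {set gT}) (c : gT -> gT -> rat) : Prop :=
  forall x y z, x \in A -> y \in A -> z \in A ->
    (c y z - c (x * y)%g z + c x (y * z)%g - c x y)%R \is a Num.int.

Definition coboundary2 (gT : finGroupType) (A : {set gT}) (c : gT -> gT -> rat) : Prop :=
  exists b : gT -> rat, forall x y, x \in A -> y \in A ->
    (c x y - (b x + b y - b (x * y)%g))%R \is a Num.int.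

(* bicyclic: cyclic or a direct product of two cyclic groups, i.e. an
   abelian group generated by (at most) two elements. *)
Definition bicyclic (gT : finGroupType) (A : {group gT}) : Prop :=
  abelian A /\ exists a b : gT, A :=: <<[set a; b]>>.

Definition in_B0 (gT : finGroupType) (G : {group gT}) (c : gT -> gT -> rat) : Prop :=
  cocycle2 G c /\
  forall A : {group gT}, A \subset G -> bicyclic A -> coboundary2 A c.

Definition B0_trivial (gT : finGroupType) (G : {group gT}) : Prop :=
  forall c, in_B0 G c -> coboundary2 G c.

From mathcomp Require Import all_boot all_order all_algebra all_fingroup all_solvable.
From mathcomp Require Import ring zify.
Set Implicit Arguments. Unset Strict Implicit. Unset Printing Implicit Defensive.
Import GRing.Theory Num.Theory.
Local Open Scope group_scope.

(* Let N = <f4, f5> and H = G/N, a Heisenberg group of order p^3 and exponent p.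
   Each element of H is uniquely h1^a h2^b h3^c with h_i the image of f_i, which
   gives coordinates (a, b, c) in F_p^3 turning the product of H into the
   Heisenberg law (section HeisenbergCoordinates).  The polynomial kappa is a
   2-cocycle for this law; composed with F_p -> Q/Z, k |-> k/p, and inflated
   along G -> H it yields a class [c] in H^2(G, Q/Z), and:
   - [c] lies in B_0(G): the commutator formulas for f3 and f4 force the images
     in H of two commuting elements of G into a common cyclic subgroup
     (commute_cyclic), and cocycles of cyclic groups are coboundaries
     (cyclic_coboundary, inflation_in_B0);
   - [c] is nonzero: for a coboundary, c(x,y) - c(y,x) - c(yx,[x,y]) only
     depends on [x,y] modulo Z (coboundary_skew), whereas the pairs (f3, f2)
     and (f4, f1), both with commutator f5, give 2/p and 0. *)

Lemma gen_ind (T : finGroupType) (A : {set T}) (P : pred T) :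
  P 1 -> (forall x y, P x -> P y -> P (x * y)) -> (forall x, x \in A -> P x) ->
  forall x, x \in <<A>> -> P x.
Proof.
move=> P1 PM PA x Ax.
have gP : group_set [set x | P x].
  by apply/group_setP; split=> [|u v]; rewrite !inE //; apply: PM.
have : <<A>> \subset Group gP.
  by rewrite gen_subG; apply/subsetP => a Aa; rewrite inE PA.
by move/subsetP/(_ x Ax); rewrite inE.
Qed.

Lemma mulg_swap (T : finGroupType) (x y z : T) : commute y z -> x * y * z = x * z * y.
Proof. by move=> cyz; rewrite -!mulgA cyz. Qed.

Section PrimeField.
Variable p : nat.
Hypothesis pr_p : prime p.

Lemma Fp_val1 : nat_of_ord (1 : 'F_p)%R = 1%N.
Proof. by rewrite -[1%R]/(1%:R : 'F_p)%R val_Fp_nat // modn_small ?prime_gt1. Qed.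

Lemma Fp_valD (a b : 'F_p) : nat_of_ord (a + b)%R = ((a + b) %% p)%N.
Proof. by rewrite -val_Fp_nat // natrD !natr_Zp. Qed.

Lemma Fp_valM (a b : 'F_p) : nat_of_ord (a * b)%R = ((a * b) %% p)%N.
Proof. by rewrite -val_Fp_nat // natrM !natr_Zp. Qed.

Lemma Fp_dvd_eq0 (x : 'F_p) : p %| x -> x = 0%R.
Proof.
have x_lt_p : (x < p)%N by rewrite -[X in (_ < X)%N](Fp_cast pr_p) ltn_ord.
by rewrite /dvdn modn_small // => /eqP x0; apply: val_inj.
Qed.

Lemma expFpD (T : finGroupType) (g : T) (a b : 'F_p) :
  g ^+ p = 1 -> g ^+ (a + b)%R = g ^+ a * g ^+ b.
Proof. by move=> gp; rewrite Fp_valD expg_mod // expgD. Qed.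

Lemma expFpM (T : finGroupType) (g : T) (a b : 'F_p) :
  g ^+ p = 1 -> g ^+ (a * b)%R = g ^+ (a * b)%N.
Proof. by move=> gp; rewrite Fp_valM expg_mod. Qed.

(* Read in F_p with p odd, 'C(n, 2) is the polynomial n (n - 1) / 2. *)
Lemma binFpD (a b : 'F_p) : (2 < p)%N ->
  (('C(nat_of_ord (a + b)%R, 2))%:R = ('C(a, 2))%:R + ('C(b, 2))%:R + a * b :> 'F_p)%R.
Proof.
move=> p_gt2.
have bin2 n : (2%:R * ('C(n, 2))%:R = n%:R * (n%:R - 1) :> 'F_p)%R.
  elim: n => [|n IH]; first by rewrite bin0n mulr0 mul0r.
  by rewrite binS bin1 natrD mulrDr IH -(addn1 n) natrD; ring.
have two_unit : (2%:R : 'F_p)%R \is a GRing.unit.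
  by rewrite unitfE; apply/eqP => /(congr1 (@nat_of_ord _)); rewrite val_Fp_nat // modn_small.
by apply: (mulrI two_unit); rewrite !mulrDr !bin2 !natr_Zp; ring.
Qed.

End PrimeField.

Definition heis_mul p (s t : 'F_p * 'F_p * 'F_p) : 'F_p * 'F_p * 'F_p :=
  (s.1.1 + t.1.1, s.1.2 + t.1.2, s.2 + t.2 + s.1.2 * t.1.1)%R.

Section HeisenbergCoordinates.
Variables (T : finGroupType) (p : nat) (K : {group T}) (h1 h2 h3 : T).
Hypotheses (pr_p : prime p) (h1p : h1 ^+ p = 1) (h2p : h2 ^+ p = 1) (h3p : h3 ^+ p = 1).
Hypotheses (c31 : commute h3 h1) (c32 : commute h3 h2) (rel21 : h2 * h1 = h1 * h2 * h3).

Definition heis_word (t : 'F_p * 'F_p * 'F_p) : T := h1 ^+ t.1.1 * h2 ^+ t.1.2 * h3 ^+ t.2.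

Lemma heis_wordM s t : heis_word s * heis_word t = heis_word (heis_mul s t).
Proof.
case: s => [[a b] c]; case: t => [[a' b'] c'].
rewrite /heis_word /heis_mul; cbn [fst snd]; rewrite !expFpD // expFpM //.
have swap21 : h2 ^+ b * h1 ^+ a' = h1 ^+ a' * h2 ^+ b * h3 ^+ (b * a').
  have R : [~ h2, h1] = h3 by apply: (@mulgI _ (h1 * h2)); rewrite -rel21 -commgC.
  by rewrite commgC commXXg R // ?R; exact: commute_sym.
rewrite !mulgA (mulg_swap _ (commuteX2 _ _ c31)) (mulg_swap _ (commuteX2 _ _ c32)).
rewrite -(mulgA (h1 ^+ a) (h2 ^+ b)) swap21 !mulgA.
rewrite (mulg_swap _ (commute_sym (commuteX2 _ _ c32))).
rewrite -!mulgA -!expgD; do 3 congr (_ * _).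
rewrite mulgA -expgD mulgA (commuteX2 _ _ c32) -mulgA -expgD; congr (_ * (_ ^+ _)); lia.
Qed.

Definition heis_coord (h : T) : 'F_p * 'F_p * 'F_p :=
  odflt (0, 0, 0)%R [pick t | heis_word t == h].

Hypotheses (Kh1 : h1 \in K) (Kh2 : h2 \in K) (Kh3 : h3 \in K).
Hypotheses (cardK : #|K| = (p ^ 3)%N) (genK : K \subset <<[set h1; h2; h3]>>).

Lemma heis_word_bij : heis_word @: [set: 'F_p * 'F_p * 'F_p] = K /\ injective heis_word.
Proof.
set X := heis_word @: _.
have gX : group_set X.
  apply/group_setP; split.
    by apply/imsetP; exists (0, 0, 0)%R; rewrite ?inE // /heis_word /= !expg0 !mulg1.
  by move=> _ _ /imsetP[s _ ->] /imsetP[t _ ->]; rewrite heis_wordM imset_f.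
have sKX : K \subset X.
  apply: (subset_trans genK); rewrite (gen_subG _ (Group gX)).
  apply/subsetP => x; rewrite !inE => /orP[/orP[]|] /eqP ->; apply/imsetP.
  - exists (1, 0, 0)%R; rewrite ?inE // /heis_word; cbn [fst snd].
    by rewrite Fp_val1 // !expg0 expg1 !mulg1.
  - exists (0, 1, 0)%R; rewrite ?inE // /heis_word; cbn [fst snd].
    by rewrite Fp_val1 // !expg0 expg1 mulg1 mul1g.
  - exists (0, 0, 1)%R; rewrite ?inE // /heis_word; cbn [fst snd].
    by rewrite Fp_val1 // !expg0 expg1 !mul1g.
have sXK : X \subset K.
  by apply/subsetP => _ /imsetP[[[a b] c] _ ->]; rewrite !groupM ?groupX.
have eXK : X = K :> {set T} by apply/eqP; rewrite eqEsubset sXK.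
have inj : {in [set: 'F_p * 'F_p * 'F_p] &, injective heis_word}.
  apply/imset_injP.
  by rewrite -/X eXK cardK cardsT !card_prod card_Fp // (expnS p 2) expnS expn1 mulnA.
by split=> // s t; apply: inj; rewrite inE.
Qed.

Lemma heis_coordK h : h \in K -> heis_word (heis_coord h) = h.
Proof.
have [eXK _] := heis_word_bij; rewrite -eXK => /imsetP[t _ ->]; rewrite /heis_coord.
by case: pickP => [t' /eqP //|/(_ t)]; rewrite eqxx.
Qed.

Lemma heis_wordK t : heis_coord (heis_word t) = t.
Proof.
have [eXK inj] := heis_word_bij; apply: inj; apply: heis_coordK.
by rewrite -eXK imset_f ?inE.
Qed.

Lemma heis_coordM h h' : h \in K -> h' \in K ->
  heis_coord (h * h') = heis_mul (heis_coord h) (heis_coord h').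
Proof.
by move=> Kh Kh'; rewrite -{1}(heis_coordK Kh) -{1}(heis_coordK Kh') heis_wordM heis_wordK.
Qed.

End HeisenbergCoordinates.

Arguments heis_word {T} p h1 h2 h3 t.

Lemma int_congr (x y : rat) : x \is a Num.int -> x = y -> y \is a Num.int.
Proof. by move=> xZ <-. Qed.

Section CyclicCocycles.
Variables (T : finGroupType) (u : T) (f : T -> T -> rat).
Hypothesis f_cocycle : cocycle2 <[u]> f.

Local Notation n := #[u].

Let s (k : nat) : rat := \sum_(i < k) f (u ^+ i) u.

(* A primitive of f along the powers of u, corrected to be n-periodic. *)
Let B (k : nat) : rat := (k%:R * (s n / n%:R) - s k)%R.

Let BS k : B k.+1 = (B k + s n / n%:R - f (u ^+ k) u)%R.
Proof.
have sS : s k.+1 = (s k + f (u ^+ k) u)%R by rewrite /s big_ord_recr.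
by rewrite /B sS -(addn1 k) natrD; ring.
Qed.

Let B_mod k : B k = B (k %% n).
Proof.
have Bper m : B (m + n) = B m.
  elim: m => [|m IH]; last by rewrite addSn !BS IH -expg_mod_order modnDr expg_mod_order.
  rewrite add0n /B mulrC mulfVK ?pnatr_eq0 -?lt0n ?order_gt0 //.
  by rewrite /s big_ord0 subr0 mul0r subrr.
have Bq q r : B (r + q * n) = B r.
  by elim: q r => [|q IH] r; rewrite ?mul0n ?addn0 // mulSn addnCA addnC Bper IH.
by rewrite {1}(divn_eq k n) addnC Bq.
Qed.

Let f_powers i j :
  (f (u ^+ i) (u ^+ j) - (B i + B j - B (i + j) + f 1 1))%R \is a Num.int.
Proof.
elim: j => [|j IH].
  have := f_cocycle (mem_cycle u i) (group1 _) (group1 _); rewrite !mulg1 => h.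
  rewrite addn0 expg0 /B /s big_ord0 subr0 mul0r subr0; rewrite -rpredN.
  by apply: (int_congr h); ring.
have := f_cocycle (mem_cycle u i) (mem_cycle u j) (cycle_id u).
rewrite -expgD -expgSr addnS !BS => h.
by apply: (int_congr (rpredD IH h)); rewrite expgSr; ring.
Qed.

Lemma cyclic_coboundary : coboundary2 <[u]> f.
Proof.
pose idx (x : T) : nat := oapp val 0 [pick i : 'I_n | u ^+ i == x].
have idxK x : x \in <[u]> -> u ^+ idx x = x.
  move=> /cyclePmin[i lti ->]; rewrite /idx.
  by case: pickP => [j /eqP //|/(_ (Ordinal lti))]; rewrite eqxx.
exists (fun x => B (idx x) + f 1 1)%R => x y xu yu.
have eB : B (idx (x * y)) = B (idx x + idx y).
  rewrite B_mod [RHS]B_mod; congr B; apply/eqP.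
  by rewrite -eq_expg_mod_order idxK ?groupM // expgD !idxK.
have := f_powers (idx x) (idx y); rewrite !idxK // => h.
by apply: (int_congr h); rewrite eB; ring.
Qed.

End CyclicCocycles.

Definition frac_p p (k : 'F_p) : rat := ((nat_of_ord k)%:R / p%:R)%R.

Lemma frac_p0 p : frac_p (0 : 'F_p)%R = 0%R.
Proof. by rewrite /frac_p mul0r. Qed.

Lemma frac_p_int p (k1 k2 k3 k4 : 'F_p) : prime p -> (k1 - k2 + k3 - k4 = 0)%R ->
  (frac_p k1 - frac_p k2 + frac_p k3 - frac_p k4)%R \is a Num.int.
Proof.
move=> pr_p e; set m := (k1 + k3)%N; set m' := (k2 + k4)%N.
have mod_m : (m %% p = m' %% p)%N.
  have : (m%:R = m'%:R :> 'F_p)%R.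
    by apply/eqP; rewrite -subr_eq0 /m /m' !natrD !natr_Zp -e; apply/eqP; ring.
  by move/(congr1 (@nat_of_ord _)); rewrite !val_Fp_nat.
have p0 : (p%:R != 0 :> rat)%R by rewrite pnatr_eq0 -lt0n prime_gt0.
have -> : (frac_p k1 - frac_p k2 + frac_p k3 - frac_p k4 = (m%:R - m'%:R) / p%:R :> rat)%R.
  by rewrite /frac_p !natrD; field.
rewrite (divn_eq m p) (divn_eq m' p) mod_m !natrD !natrM.
rewrite (_ : (_ / p%:R = (m %/ p)%:R - (m' %/ p)%:R)%R) ?rpredB ?rpred_nat //.
by field.
Qed.

Lemma frac_p2_not_int p : prime p -> (2 < p)%N -> ~ frac_p (2%:R : 'F_p)%R \is a Num.int.
Proof.
move=> pr_p p_gt2 /norm_intr_ge1; rewrite /frac_p val_Fp_nat // modn_small //.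
have p_pos : (0 < p%:R :> rat)%R by rewrite ltr0n prime_gt0.
rewrite ger0_norm ?divr_ge0 // ler_pdivlMr // mul1r ler_nat leqNgt p_gt2 => /implyP.
by rewrite mulf_neq0 // invr_eq0 pnatr_eq0 -lt0n prime_gt0.
Qed.

Lemma proportional (F : fieldType) (a b a' b' : F) :
  ((a != 0) || (b != 0) -> b * a' = b' * a -> exists k, a' = k * a /\ b' = k * b)%R.
Proof.
have [a0 /= b_neq0 e|a_neq0 _ e] := eqVneq a 0%R.
  exists (b' / b)%R; rewrite a0 mulr0 divfK //; split=> //.
  by apply: (mulfI b_neq0); rewrite e a0 !mulr0.
by exists (a' / a)%R; rewrite divfK //; split=> //; apply: (mulIf a_neq0); rewrite -e; field.
Qed.

Definition kappa p (s t : 'F_p * 'F_p * 'F_p) : 'F_p :=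
  (2%:R * (s.2 + t.1.1 * s.1.2) * t.1.2 + t.1.1 * s.1.2 * (s.1.2 - 1))%R.

Lemma kappa_cocycle p (u v w : 'F_p * 'F_p * 'F_p) :
  (kappa v w - kappa (heis_mul u v) w + kappa u (heis_mul v w) - kappa u v = 0)%R.
Proof.
case: u => [[a b] c]; case: v => [[a' b'] c']; case: w => [[a'' b''] c''].
by rewrite /kappa /heis_mul /=; ring.
Qed.

Lemma kappa0l p (t : 'F_p * 'F_p * 'F_p) : kappa (0, 0, 0)%R t = 0%R.
Proof. by rewrite /kappa; cbn [fst snd]; ring. Qed.

Lemma kappa0r p (t : 'F_p * 'F_p * 'F_p) : kappa t (0, 0, 0)%R = 0%R.
Proof. by rewrite /kappa; cbn [fst snd]; ring. Qed.

(* Inflation: if k is a cocycle on K and f : G -> K a homomorphism mapping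
   commuting pairs into cyclic subgroups, then k o (f x f) lies in B_0(G),
   since its restriction to any bicyclic subgroup factors through a cyclic
   group, where every cocycle is a coboundary. *)
Lemma inflation_in_B0 (gT rT : finGroupType) (G : {group gT}) (K : {group rT})
    (f : gT -> rT) (k : rT -> rT -> rat) :
  {in G &, {morph f : x y / x * y}} -> (forall x, x \in G -> f x \in K) ->
  cocycle2 K k ->
  (forall x y, x \in G -> y \in G -> commute x y ->
     exists2 u, u \in K & f x \in <[u]> /\ f y \in <[u]>) ->
  in_B0 G (fun x y => k (f x) (f y)).
Proof.
move=> fM fK k_cocycle commuting_cyclic.
split=> [x y z xG yG zG | A sAG [cAA [a [b defA]]]].
  by rewrite !fM ?groupM //; apply: k_cocycle; rewrite ?fK ?groupM.
have [Aa Ab] : a \in A /\ b \in A by rewrite defA; split; apply: mem_gen; rewrite !inE eqxx ?orbT.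
have [aG bG] := (subsetP sAG a Aa, subsetP sAG b Ab).
have [u Ku [fa fb]] := commuting_cyclic a b aG bG (centsP cAA a Aa b Ab).
have f1 : f 1 = 1 by apply: (@mulgI _ (f 1)); rewrite -fM ?mulg1.
have fA x : x \in A -> f x \in <[u]>.
  rewrite defA => xA; suff /andP[] : (x \in G) && (f x \in <[u]>) by [].
  apply: (gen_ind (P := fun x => (x \in G) && (f x \in <[u]>)) _ _ _ xA)
    => [|v w /andP[vG fv] /andP[wG fw]|v].
  - by rewrite group1 f1 group1.
  - by rewrite groupM // fM // groupM.
  by rewrite !inE => /orP[] /eqP ->; rewrite ?aG ?bG.
have [beta hbeta] : coboundary2 <[u]> k.
  have suK : <[u]> \subset K by rewrite cycle_subG.
  by apply: cyclic_coboundary => x y z xu yu zu; apply: k_cocycle; apply: (subsetP suK).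
exists (fun x => beta (f x)) => x y xA yA.
by rewrite fM ?(subsetP sAG) //; apply: hbeta; apply: fA.
Qed.

(* Skew part of c at (x, y), measured against the relation x y = y x [x, y]. *)
Definition comm_skew (gT : finGroupType) (c : gT -> gT -> rat) (x y : gT) : rat :=
  (c x y - c y x - c (y * x)%g [~ x, y])%R.

Lemma coboundary_skew (gT : finGroupType) (G : {group gT}) (c : gT -> gT -> rat) :
  coboundary2 G c -> forall x y x' y', x \in G -> y \in G -> x' \in G -> y' \in G ->
  [~ x, y] = [~ x', y'] -> (comm_skew c x y - comm_skew c x' y')%R \is a Num.int.
Proof.
move=> [b hb] x y x' y' xG yG x'G y'G eR.
have skewE u v : u \in G -> v \in G -> (comm_skew c u v + b [~ u, v])%R \is a Num.int.
  move=> uG vG; have := rpredB (rpredB (hb u v uG vG) (hb v u vG uG))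
    (hb _ _ (groupM vG uG) (groupR uG vG)).
  by rewrite -commgC => h; apply: (int_congr h); rewrite /comm_skew; ring.
have := rpredB (skewE x y xG yG) (skewE x' y' x'G y'G).
by rewrite eR => h; apply: (int_congr h); ring.
Qed.

Section HeisenbergExtension.
Variables (gT : finGroupType) (G : {group gT}) (p : nat) (f1 f2 f3 f4 f5 : gT).
Hypotheses (pr_p : prime p) (p_gt2 : (2 < p)%N).
Hypothesis genG : G :=: <<[set f1; f2; f3; f4; f5]>>.
Hypotheses (f4p : f4 ^+ p = 1) (f5p : f5 ^+ p = 1) (Zf5 : f5 \in 'Z(G)).
Hypotheses (r21 : [~ f2, f1] = f3) (r31 : [~ f3, f1] = f4) (r41 : [~ f4, f1] = f5).
Hypotheses (r32 : [~ f3, f2] = f5) (r42 : [~ f4, f2] = 1) (r43 : [~ f4, f3] = 1).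
Hypothesis isoN : <<[set f4; f5]>> \isog [set: 'Z_p * 'Z_p].
Hypothesis cardH : #|G / <<[set f4; f5]>>| = (p ^ 3)%N.
Hypothesis expH : exponent (G / <<[set f4; f5]>>) = p.

Local Notation N := <<[set f4; f5]>>.
Local Notation H := (G / N).
Local Notation pi := (coset N).

Let f1G : f1 \in G. Proof. by rewrite genG mem_gen // !inE eqxx. Qed.
Let f2G : f2 \in G. Proof. by rewrite genG mem_gen // !inE eqxx ?orbT. Qed.
Let f3G : f3 \in G. Proof. by rewrite genG mem_gen // !inE eqxx ?orbT. Qed.
Let f4G : f4 \in G. Proof. by rewrite genG mem_gen // !inE eqxx ?orbT. Qed.
Let f5G : f5 \in G. Proof. by rewrite genG mem_gen // !inE eqxx ?orbT. Qed.
Let f4N : f4 \in N. Proof. by rewrite mem_gen // !inE eqxx. Qed.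
Let f5N : f5 \in N. Proof. by rewrite mem_gen // !inE eqxx ?orbT. Qed.

Lemma G_ind (P : pred gT) : P 1 -> {in G &, forall x y, P x -> P y -> P (x * y)} ->
  P f1 -> P f2 -> P f3 -> P f4 -> P f5 -> {in G, forall x, P x}.
Proof.
move=> P1 PM P_1 P_2 P_3 P_4 P_5 x; rewrite {1}genG => xG.
suff /andP[] : (x \in G) && P x by [].
apply: (gen_ind (P := fun x => (x \in G) && P x) _ _ _ xG) => [|u v|u].
- by rewrite group1 P1.
- by move=> /andP[uG Pu] /andP[vG Pv]; rewrite groupM ?PM.
by rewrite !inE => /orP[/orP[/orP[/orP[]|]|]|] /eqP ->; apply/andP.
Qed.

Let f5_central g : g \in G -> commute f5 g.
Proof. by move=> gG; move/centerP: Zf5 => [_]; apply. Qed.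

Let conj_f5 g : g \in G -> f5 ^ g = f5.
Proof. by move=> gG; rewrite conjgE f5_central ?mulKg. Qed.

Lemma N_abelian : abelian N.
Proof.
rewrite abelian_gen; apply/centsP => u + v.
by move=> /set2P[] -> /set2P[] -> //; [exact: commute_sym (f5_central f4G) | exact: f5_central].
Qed.

Lemma G_norm_N : G \subset 'N(N).
Proof.
rewrite {1}genG gen_subG; apply/subsetP => g gS; have gG : g \in G by rewrite genG mem_gen.
rewrite inE -genJ gen_subG; apply/subsetP => y.
rewrite mem_conjg !inE => /orP[] /eqP e; rewrite -(conjgKV g y) e; last by rewrite conj_f5.
move: gS; rewrite !inE => /orP[/orP[/orP[/orP[]|]|]|] /eqP ->.
- by rewrite conjg_mulR r41 groupM.
- by rewrite conjg_mulR r42 mulg1.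
- by rewrite conjg_mulR r43 mulg1.
- by rewrite conjgE mulKg.
- by rewrite conjgE -(f5_central f4G) mulKg.
Qed.

Let piM : {in G &, {morph pi : x y / x * y}}.
Proof. by move=> x y xG yG; rewrite morphM //= (subsetP G_norm_N). Qed.

Let piR x y : x \in G -> y \in G -> pi [~ x, y] = [~ pi x, pi y].
Proof. by move=> xG yG; rewrite morphR //= (subsetP G_norm_N). Qed.

Let pi_f4 : pi f4 = 1. Proof. exact: coset_id f4N. Qed.
Let pi_f5 : pi f5 = 1. Proof. exact: coset_id f5N. Qed.

Local Notation h1 := (pi f1).
Local Notation h2 := (pi f2).
Local Notation h3 := (pi f3).

Let H_exp h : h \in H -> h ^+ p = 1.
Proof. by move=> Hh; rewrite -expH expg_exponent. Qed.
Let h1p : h1 ^+ p = 1. Proof. by rewrite H_exp ?mem_quotient. Qed.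
Let h2p : h2 ^+ p = 1. Proof. by rewrite H_exp ?mem_quotient. Qed.
Let h3p : h3 ^+ p = 1. Proof. by rewrite H_exp ?mem_quotient. Qed.
Let c31 : commute h3 h1. Proof. by apply/commgP; rewrite -piR // r31 pi_f4. Qed.
Let c32 : commute h3 h2. Proof. by apply/commgP; rewrite -piR // r32 pi_f5. Qed.
Let rel21 : h2 * h1 = h1 * h2 * h3. Proof. by rewrite commgC -r21 piR. Qed.
Let Hh1 : h1 \in H. Proof. exact: mem_quotient. Qed.
Let Hh2 : h2 \in H. Proof. exact: mem_quotient. Qed.
Let Hh3 : h3 \in H. Proof. exact: mem_quotient. Qed.

Let H_gen : H \subset <<[set h1; h2; h3]>>.
Proof.
apply/subsetP => _ /morphimP[x _ xG ->]; move: x xG.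
apply: (G_ind (P := fun x => pi x \in <<[set h1; h2; h3]>>)) => [|x y xG yG|||||];
  rewrite ?morph1 ?group1 ?pi_f4 ?pi_f5 //.
- by rewrite piM //; apply: groupM.
all: by apply: mem_gen; rewrite !inE eqxx ?orbT.
Qed.

Local Notation crdH := (heis_coord p h1 h2 h3).
Local Notation word := (heis_word p h1 h2 h3).

Definition crd (x : gT) : 'F_p * 'F_p * 'F_p := crdH (pi x).

Lemma crdHM h h' : h \in H -> h' \in H -> crdH (h * h') = heis_mul (crdH h) (crdH h').
Proof. exact: (heis_coordM pr_p h1p h2p h3p c31 c32 rel21 Hh1 Hh2 Hh3 cardH H_gen). Qed.

Lemma crdM x y : x \in G -> y \in G -> crd (x * y) = heis_mul (crd x) (crd y).
Proof. by move=> xG yG; rewrite /crd piM // crdHM ?mem_quotient. Qed.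

Lemma crdK x : x \in G -> word (crd x) = pi x.
Proof.
move=> xG; rewrite (heis_coordK pr_p h1p h2p h3p c31 c32 rel21 Hh1 Hh2 Hh3 cardH H_gen) //.
exact: mem_quotient.
Qed.

Lemma crd_word x t : x \in G -> pi x = word t -> crd x = t.
Proof.
move=> xG e; rewrite /crd e.
exact: (heis_wordK pr_p h1p h2p h3p c31 c32 rel21 Hh1 Hh2 Hh3 cardH H_gen).
Qed.

Local Notation cA x := (crd x).1.1.
Local Notation cB x := (crd x).1.2.
Local Notation cC x := (crd x).2.

Lemma crd_f1 : crd f1 = (1, 0, 0)%R.
Proof.
by apply: crd_word => //; rewrite /heis_word; cbn [fst snd]; rewrite Fp_val1 // expg1 !expg0 !mulg1.
Qed.

Lemma crd_f2 : crd f2 = (0, 1, 0)%R.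
Proof.
apply: crd_word => //; rewrite /heis_word; cbn [fst snd].
by rewrite Fp_val1 // expg1 !expg0 mulg1 mul1g.
Qed.

Lemma crd_f3 : crd f3 = (0, 0, 1)%R.
Proof.
by apply: crd_word => //; rewrite /heis_word; cbn [fst snd]; rewrite Fp_val1 // expg1 !expg0 !mul1g.
Qed.

Lemma crd_ker x : x \in G -> pi x = 1 -> crd x = (0, 0, 0)%R.
Proof.
by move=> xG e; apply: crd_word; rewrite // e /heis_word; cbn [fst snd]; rewrite !expg0 !mulg1.
Qed.

Let crd1 : crd 1 = (0, 0, 0)%R. Proof. by rewrite crd_ker ?morph1. Qed.
Let crd_f4 : crd f4 = (0, 0, 0)%R. Proof. exact: crd_ker. Qed.
Let crd_f5 : crd f5 = (0, 0, 0)%R. Proof. exact: crd_ker. Qed.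

Lemma crdX x k : x \in G ->
  cA (x ^+ k) = (k%:R * cA x)%R /\ cB (x ^+ k) = (k%:R * cB x)%R.
Proof.
move=> xG; elim: k => [|k [IHa IHb]]; first by rewrite expg0 crd1 /= !mul0r.
by rewrite expgS crdM ?groupX // /heis_mul /= IHa IHb mulrS; split; ring.
Qed.

Lemma comm_f4 y : y \in G -> [~ f4, y] = f5 ^+ cA y.
Proof.
move=> yG; apply/eqP; move: y yG.
apply: (G_ind (P := fun y => [~ f4, y] == f5 ^+ cA y)) => [|u v uG vG /eqP hu /eqP hv|||||].
- by rewrite crd1 commg1.
- apply/eqP; rewrite commgMJ hu hv crdM // /heis_mul /= expFpD //.
  by rewrite conjXg conj_f5 // -!expgD addnC.
- by rewrite crd_f1; cbn [fst snd]; rewrite Fp_val1 // expg1 r41.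
- by rewrite crd_f2 r42.
- by rewrite crd_f3 r43.
- by rewrite crd_f4 commgg.
rewrite crd_f5; cbn [fst snd]; rewrite expg0; apply/commgP.
exact: commute_sym (f5_central f4G).
Qed.

(* The f5-exponent of [f3, y]; it is additive up to the cross term a(u) a(v)
   because 'C(., 2) is quadratic (binFpD). *)
Definition j_f3 (y : gT) : 'F_p := (('C(cA y, 2))%:R + cB y)%R.

Lemma comm_f3 y : y \in G -> [~ f3, y] = f4 ^+ cA y * f5 ^+ j_f3 y.
Proof.
have cz g k : g \in G -> commute (f5 ^+ k) g.
  by move=> gG; exact: commute_sym (commuteX k (commute_sym (f5_central gG))).
move=> yG; apply/eqP; move: y yG.
apply: (G_ind (P := fun y => [~ f3, y] == f4 ^+ cA y * f5 ^+ j_f3 y))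
  => [|u v uG vG /eqP hu /eqP hv|||||]; rewrite /j_f3.
- by rewrite crd1; cbn [fst snd]; rewrite bin0n addr0 !expg0 commg1 mulg1.
- rewrite commgMJ hu hv conjMg !conjXg conj_f5 // conjg_mulR comm_f4 //.
  rewrite expgMn; last exact: commute_sym (cz _ _ f4G).
  rewrite crdM // /heis_mul; cbn [fst snd]; rewrite binFpD // !expFpD // expFpM // expgM.
  have c4 := cz _ _ (groupX (cA u) f4G).
  rewrite -!expgM !mulgA (mulg_swap _ (c4 _)) (mulg_swap _ (c4 _)).
  rewrite -!mulgA -!expgD !mulgA -!expgD.
  by apply/eqP; congr (_ ^+ _ * _ ^+ _); ring.
- by rewrite crd_f1; cbn [fst snd]; rewrite Fp_val1 // bin_small // addr0 expg1 expg0 mulg1 r31.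
- by rewrite crd_f2; cbn [fst snd]; rewrite bin0n add0r Fp_val1 // expg0 expg1 mul1g r32.
- by rewrite crd_f3; cbn [fst snd]; rewrite bin0n addr0 !expg0 mulg1 commgg.
- by rewrite crd_f4; cbn [fst snd]; rewrite bin0n addr0 !expg0 mulg1 -invgR r43 invg1.
rewrite crd_f5; cbn [fst snd]; rewrite bin0n addr0 !expg0 mulg1; apply/commgP.
exact: commute_sym (f5_central f3G).
Qed.

(* N = <f4> x <f5> has order p^2, so it lies in no cyclic subgroup of exponent p. *)
Let N_not_in_cycle g : g ^+ p = 1 -> ~~ (N \subset <[g]>).
Proof.
move=> gp; apply/negP => /subset_leq_card.
rewrite (card_isog isoN) cardsT card_prod !card_ord Zp_cast ?prime_gt1 // => le_pp.
have le_gp : (#|<[g]>| <= p)%N by apply: dvdn_leq; rewrite ?prime_gt0 // order_dvdn gp.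
have : (p < p * p)%N by rewrite ltn_Pmull ?prime_gt1 ?prime_gt0.
by rewrite ltnNge (leq_trans le_pp le_gp).
Qed.

(* f5 has order p: otherwise f5 = 1 and N = <f4> would be cyclic. *)
Lemma order_f5 : #[f5] = p.
Proof.
have [f5_1|ne1] := eqVneq #[f5] 1%N; last first.
  by apply/(prime_nt_dvdP pr_p ne1); rewrite order_dvdn f5p.
move/eqP: f5_1; rewrite order_eq1 => /eqP f5_1; case/negP: (N_not_in_cycle f4p).
rewrite gen_subG; apply/subsetP => y; rewrite !inE f5_1.
by move=> /orP[] /eqP ->; rewrite ?cycle_id ?group1.
Qed.

Lemma f4_indep k : f4 ^+ k \in <[f5]> -> p %| k.
Proof.
move=> f4k; apply/negPn/negP => p_k.
have k_unit : (k%:R : 'F_p)%R \is a GRing.unit by rewrite unitFpE // prime_coprime.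
have kk' : ((k * ((k%:R : 'F_p)^-1)%R) %% p = 1)%N.
  by rewrite -val_Fp_nat // natrM natr_Zp mulrV // Fp_val1.
have f4_in : f4 \in <[f5]> by rewrite -(expg1 f4) -kk' expg_mod // expgM groupX.
case/negP: (N_not_in_cycle f5p).
by rewrite gen_subG; apply/subsetP => y; rewrite !inE => /orP[] /eqP ->; rewrite ?cycle_id.
Qed.

Lemma comm_N x n : x \in G -> n \in N -> [~ x, n] \in <[f5 ^+ cA x]>.
Proof.
move=> xG nN; suff /andP[] : (n \in G) && ([~ x, n] \in <[f5 ^+ cA x]>) by [].
apply: (gen_ind (P := fun n => (n \in G) && ([~ x, n] \in <[f5 ^+ cA x]>)) _ _ _ nN).
- by rewrite group1 commg1 group1.
- move=> u v /andP[uG xu] /andP[vG xv]; rewrite groupM //= commgMJ groupM //.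
  by case/cycleP: xu => k ->; rewrite !conjXg conj_f5 ?mem_cycle.
move=> y; rewrite !inE => /orP[] /eqP ->; rewrite ?f4G ?f5G /=.
- by rewrite -invgR comm_f4 // groupV cycle_id.
- by have /commgP/eqP -> := commute_sym (f5_central xG); rewrite group1.
Qed.

Lemma pi_central x : x \in G -> cA x = 0%R -> cB x = 0%R -> pi x = h3 ^+ cC x.
Proof. by move=> xG xa xb; rewrite -crdK // /heis_word xa xb !expg0 !mul1g. Qed.

Lemma central_decomp z : z \in G -> cA z = 0%R -> cB z = 0%R ->
  exists2 n, n \in N & z = f3 ^+ cC z * n.
Proof.
move=> zG za zb; have nN := subsetP G_norm_N.
exists ((f3 ^+ cC z)^-1 * z); last by rewrite mulKVg.
have pi_z : pi z = pi (f3 ^+ cC z) by rewrite pi_central // morphX ?nN.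
apply: coset_idr; first by rewrite groupM ?groupV ?nN ?groupX.
by rewrite morphM ?groupV ?nN ?groupX // morphV ?nN ?groupX //= pi_z mulVg.
Qed.

(* If x commutes with f3^d n (n in N), then [f3, x]^d = [x, n] lies in <f5^a(x)>. *)
Lemma commute_f3_part x d n : x \in G -> n \in N -> commute x (f3 ^+ d * n) ->
  (f4 ^+ cA x * f5 ^+ j_f3 x) ^+ d \in <[f5 ^+ cA x]>.
Proof.
move=> xG nN cxz.
have c3 : commute f3 [~ x, f3].
  rewrite -invgR comm_f3 //; apply: commuteV; apply: commuteM; apply: commuteX.
  - by apply/commgP; rewrite -invgR r43 invg1.
  - exact: commute_sym (f5_central f3G).
have Nd : [~ x, f3] ^+ d \in N by rewrite -invgR comm_f3 // groupX // groupV groupM // groupX.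
have E : [~ x, f3 ^+ d * n] = [~ x, n] * [~ x, f3] ^+ d.
  rewrite commgMJ commgX //; congr (_ * _).
  by rewrite conjgE (centsP N_abelian _ Nd _ nN) mulKg.
suff <- : [~ x, n] = (f4 ^+ cA x * f5 ^+ j_f3 x) ^+ d by apply: comm_N.
move/commgP/eqP: cxz; rewrite E -(invgR f3 x) comm_f3 // expgVn => /eqP.
by rewrite -eq_mulgV1 => /eqP.
Qed.

Lemma commute_central x z : x \in G -> z \in G -> commute x z ->
  cA z = 0%R -> cB z = 0%R -> cC z = 0%R \/ (cA x = 0%R /\ cB x = 0%R).
Proof.
move=> xG zG cxz za zb; have [n nN defz] := central_decomp zG za zb.
have := commute_f3_part (d := cC z) xG nN; rewrite -defz => /(_ cxz).
rewrite expgMn; last by apply: commuteX2; exact: commute_sym (f5_central f4G).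
have [a0|a_neq0] := eqVneq (cA x) 0%R.
  rewrite a0 !expg0 expg1n cycle1 mul1g inE -expgM -order_dvdn order_f5 /j_f3 a0 bin0n add0r.
  by rewrite Euclid_dvdM // => /orP[] /(Fp_dvd_eq0 pr_p); [right | left].
move=> in_f5a; left; apply: (Fp_dvd_eq0 pr_p).
have : f4 ^+ (cA x * cC z) \in <[f5]>.
  have sa : <[f5 ^+ cA x]> \subset <[f5]> by rewrite cycle_subG mem_cycle.
  rewrite expgM -(mulgK (f5 ^+ j_f3 x ^+ cC z) (_ ^+ cC z)) groupM //; first exact: (subsetP sa).
  by rewrite groupV groupX // mem_cycle.
move/f4_indep; rewrite Euclid_dvdM // => /orP[] // /(Fp_dvd_eq0 pr_p) a0.
by rewrite a0 eqxx in a_neq0.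
Qed.

Lemma commute_coords x y : x \in G -> y \in G -> commute x y ->
  (cB x * cA y = cB y * cA x)%R.
Proof.
move=> xG yG cxy; have := congr1 (fun t => t.2) (congr1 crd cxy).
rewrite !crdM // /heis_mul; cbn [fst snd] => e.
by apply: (addrI (cC x + cC y)%R); rewrite e; ring.
Qed.

Lemma commute_power x y : x \in G -> y \in G -> commute x y ->
  (cA x != 0%R) || (cB x != 0%R) -> pi y \in <[pi x]>.
Proof.
move=> xG yG cxy nz_x; have nN := subsetP G_norm_N.
have [k [ka kb]] := proportional nz_x (commute_coords xG yG cxy).
set z := y * (x ^+ k)^-1; have zG : z \in G by rewrite groupM ?groupV ?groupX.
have defy : y = z * x ^+ k by rewrite /z mulgKV.
have cxz : commute x z by apply: commuteM => //; apply: commuteV; apply: commuteX.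
have [Xa Xb] := crdX k xG; rewrite natr_Zp in Xa Xb.
have cy : crd y = heis_mul (crd z) (crd (x ^+ k)) by rewrite -crdM ?groupX // -defy.
have za : cA z = 0%R.
  have e := congr1 (fun t => t.1.1) cy; rewrite /heis_mul /= in e.
  by apply: (addIr (k * cA x)%R); rewrite add0r -Xa -e ka Xa.
have zb : cB z = 0%R.
  have e := congr1 (fun t => t.1.2) cy; rewrite /heis_mul /= in e.
  by apply: (addIr (k * cB x)%R); rewrite add0r -Xb -e kb Xb.
have zc : cC z = 0%R.
  case: (commute_central xG zG cxz za zb) => // [[xa xb]].
  by rewrite xa xb eqxx in nz_x.
by rewrite defy piM ?groupX // pi_central // zc expg0 mul1g morphX ?nN ?mem_cycle.
Qed.

Lemma commute_cyclic x y : x \in G -> y \in G -> commute x y ->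
  exists2 u, u \in H & pi x \in <[u]> /\ pi y \in <[u]>.
Proof.
move=> xG yG cxy.
have [nz_x|z_x] := boolP ((cA x != 0%R) || (cB x != 0%R)).
  by exists (pi x); rewrite ?mem_quotient ?cycle_id ?commute_power.
have [nz_y|z_y] := boolP ((cA y != 0%R) || (cB y != 0%R)).
  by exists (pi y); rewrite ?mem_quotient ?cycle_id ?commute_power //; apply: commute_sym.
move: z_x z_y; rewrite !negb_or !negbK => /andP[/eqP xa /eqP xb] /andP[/eqP ya /eqP yb].
by exists h3; rewrite // (pi_central xG) // (pi_central yG) // !mem_cycle.
Qed.

Definition kappaH (h h' : coset_of N) : rat := frac_p (kappa (crdH h) (crdH h')).

Lemma kappaH_cocycle : cocycle2 H kappaH.
Proof.
move=> x y z Hx Hy Hz; rewrite /kappaH !crdHM ?groupM //.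
exact: frac_p_int (kappa_cocycle _ _ _).
Qed.

Lemma kappaH_in_B0 : in_B0 G (fun x y => kappaH (pi x) (pi y)).
Proof. by apply: inflation_in_B0 kappaH_cocycle commute_cyclic => // x; apply: mem_quotient. Qed.

(* ... but is not a coboundary: [f3, f2] = [f4, f1] = f5, while the skew parts
   at these two pairs are 2/p and 0. *)
Lemma kappaH_not_coboundary : ~ coboundary2 G (fun x y => kappaH (pi x) (pi y)).
Proof.
move=> /coboundary_skew /(_ f3 f2 f4 f1 f3G f2G f4G f1G); rewrite r32 r41 => /(_ erefl).
have cE x y : kappaH (pi x) (pi y) = frac_p (kappa (crd x) (crd y)) by [].
rewrite /comm_skew r32 r41 !cE crd_f5 !kappa0r crd_f4 kappa0l kappa0r crd_f3 crd_f2.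
have -> : kappa (0, 0, 1)%R (0, 1, 0)%R = (2%:R : 'F_p)%R by rewrite /kappa; cbn [fst snd]; ring.
have -> : kappa (0, 1, 0)%R (0, 0, 1)%R = (0 : 'F_p)%R by rewrite /kappa; cbn [fst snd]; ring.
by rewrite !frac_p0 !subr0; exact: frac_p2_not_int.
Qed.

Theorem B0_nontrivial : ~ B0_trivial G.
Proof. by move=> /(_ _ kappaH_in_B0); exact: kappaH_not_coboundary. Qed.

End HeisenbergExtension.

Theorem lemma2p2 (gT : finGroupType) (G : {group gT}) (p : nat)
  (f1 f2 f3 f4 f5 : gT) :
  prime p -> (3 <= p)%N ->
  #|G| = (p ^ 5)%N ->
  G :=: <<[set f1; f2; f3; f4; f5]>> ->
  f4 ^+ p = 1 -> f5 ^+ p = 1 -> f5 \in 'Z(G) ->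
  [~ f2, f1] = f3 -> [~ f3, f1] = f4 ->
  [~ f4, f1] = f5 -> [~ f3, f2] = f5 ->
  [~ f4, f2] = 1 -> [~ f4, f3] = 1 ->
  <<[set f4; f5]>> \isog [set: 'Z_p * 'Z_p] ->
  ~~ abelian (G / <<[set f4; f5]>>) ->
  #|G / <<[set f4; f5]>>| = (p ^ 3)%N ->
  exponent (G / <<[set f4; f5]>>) = p ->
  ~ B0_trivial G.
Proof.
move=> pr_p p_gt2 _ genG f4p f5p Zf5 r21 r31 r41 r32 r42 r43 isoN _ cardH expH.
exact: (B0_nontrivial pr_p p_gt2 genG f4p f5p Zf5 r21 r31 r41 r32 r42 r43 isoN cardH expH).
Qed.
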